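(* Let $(Q,\rightarrow)$ be a finite transition system, $\mathscr{U}$ a preorder on $Q$, $\mathscr{R}\subseteq\mathscr{U}$ a preorder with $\mathscr{R}\circ\rightarrow^{-1}\subseteq\rightarrow^{-1}\circ\mathscr{U}$, $\mathscr{P}\subseteq\mathscr{R}$ an equivalence relation with a representative $E.\mathrm{rep}\in E$ fixed for each block $E$ of $\mathscr{P}$, and $\mathit{NotRel}=\mathscr{U}\setminus\mathscr{R}$. Then: 1. if $E\rightarrow B$ is a $(\mathscr{P},\mathscr{R})$-splitter transition of type 1, then $\mathit{NotRel}(B)\neq\emptyset$; 2. if there is no $(\mathscr{P},\mathscr{R})$-splitter transition of type 1 and $E\rightarrow B$ is a $(\mathscr{P},\mathscr{R})$-splitter transition of type 2, then $\mathit{NotRel}(B)\neq\emptyset$.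
   Context: $\mathscr{R}^{-1}=\{(y,x)\mid(x,y)\in\mathscr{R}\}$, $\mathscr{S}\circ\mathscr{R}=\{(x,y)\mid\exists z.\ x\,\mathscr{R}\,z\wedge z\,\mathscr{S}\,y\}$, $\mathscr{R}(X)=\{q'\mid\exists q\in X.\ q\,\mathscr{R}\,q'\}$, $\rightarrow^{-1}(Y)=\{q\mid\exists y\in Y.\ q\rightarrow y\}$. A preorder is a reflexive transitive relation; its blocks are $[q]_{\mathscr{R}}=\{q'\mid q\,\mathscr{R}\,q'\wedge q'\,\mathscr{R}\,q\}$. For sets, $X\rightarrow Y$ means some $x\in X,y\in Y$ have $x\rightarrow y$; $X\,\mathscr{R}\,Y$ means $(X\times Y)\cap\mathscr{R}\neq\emptyset$. $\mathrm{RelCount}_{(\mathscr{P},\mathscr{R})}(E,B)=|\{E'\text{ block of }\mathscr{P}\mid E.\mathrm{rep}\rightarrow E'\wedge B\,\mathscr{R}\,E'\}|$. A splitter transition of type 1 is a pair ($E$ block of $\mathscr{P}$, $B$ block of $\mathscr{R}$) with $E\rightarrow B$ and $\mathrm{RelCount}_{(\mathscr{P},\mathscr{R})}(E,B)=0$; of type 2, a pair with $E.\mathrm{rep}\rightarrow B$, $\mathrm{RelCount}_{(\mathscr{P},\mathscr{R})}(E,B)=|\{[b]_{\mathscr{P}}\subseteq B\mid E.\mathrm{rep}\rightarrow b\}|$ and $E\not\subseteq\rightarrow^{-1}(B)$. *)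

From mathcomp Require Import all_boot.
Set Implicit Arguments. Unset Strict Implicit. Unset Printing Implicit Defensive.

Section Defs.
Variable Q : finType.

Definition is_preorder (r : rel Q) : Prop := reflexive r /\ transitive r.
Definition is_equivalence (r : rel Q) : Prop :=
  reflexive r /\ symmetric r /\ transitive r.

Definition block (r : rel Q) (q : Q) : {set Q} := [set q' | r q q' && r q' q].
Definition is_block (r : rel Q) (E : {set Q}) : bool := [exists q, E == block r q].

Definition set_rel (r : rel Q) (X Y : {set Q}) : bool :=
  [exists x in X, exists y in Y, r x y].

Definition pre (tr : rel Q) (Y : {set Q}) : {set Q} := [set q | [exists y in Y, tr q y]].

Definition RelCount (tr P R : rel Q) (rep : {set Q} -> Q) (E B : {set Q}) : nat :=
  #|[set E' : {set Q} | [&& is_block P E', set_rel tr [set rep E] E' & set_rel R B E']]|.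

Definition splitter1 (tr P R : rel Q) (rep : {set Q} -> Q) (E B : {set Q}) : Prop :=
  [/\ is_block P E, is_block R B, set_rel tr E B & RelCount tr P R rep E B = 0].

Definition succ_blocks_in (tr P : rel Q) (rep : {set Q} -> Q) (E B : {set Q}) : nat :=
  #|[set Eb : {set Q} | [exists b, [&& Eb == block P b, Eb \subset B & tr (rep E) b]]]|.

Definition splitter2 (tr P R : rel Q) (rep : {set Q} -> Q) (E B : {set Q}) : Prop :=
  [/\ is_block P E, is_block R B, set_rel tr [set rep E] B,
      RelCount tr P R rep E B = succ_blocks_in tr P rep E B
    & ~~ (E \subset pre tr B)].

Definition NotRel_img (U R : rel Q) (B : {set Q}) : {set Q} :=
  [set q' | [exists q in B, U q q' && ~~ R q q']].

End Defs.

From mathcomp Require Import all_boot.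

Set Implicit Arguments.
Unset Strict Implicit.
Unset Printing Implicit Defensive.

(* Both parts use the simulation hypothesis at a transition leaving E, moved to
   another state of E, which is R-related to it since P is contained in R.
   1. From x -> y with x in E and y in B one gets E.rep -> w with y U w; if y R w,
      the P-block of w would be counted by RelCount(E, B) = 0.
   2. From E.rep -> b with b in B, and x in E without a transition into B, one gets
      x -> w with b U w.  If b R w, then E -> [w]_R is not a type-1 splitter, so
      some successor block E' of E.rep lies R-above [w]_R, hence R-above B.  The
      RelCount equation says every such block is contained in B, and w, being
      R-between two states of the block B, lies in B: impossible as x has no
      transition into B. *)

Section Blocks.
Variable Q : finType.
Implicit Types (r : rel Q) (X Y B : {set Q}).

Lemma mem_block r q x : (x \in block r q) = r q x && r x q.
Proof. by rewrite inE. Qed.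

Lemma block_refl r q : reflexive r -> q \in block r q.
Proof. by move=> rrefl; rewrite mem_block rrefl. Qed.

Lemma is_block_block r q : is_block r (block r q).
Proof. by apply/existsP; exists q. Qed.

Lemma is_block_rel r X x y :
  transitive r -> is_block r X -> x \in X -> y \in X -> r x y.
Proof.
move=> rtr /existsP[q /eqP->]; rewrite !mem_block => /andP[_ rxq] /andP[rqy _].
exact: rtr rxq rqy.
Qed.

Lemma is_block_convex r X x y w :
  transitive r -> is_block r X -> x \in X -> y \in X -> r x w -> r w y -> w \in X.
Proof.
move=> rtr /existsP[q /eqP->]; rewrite !mem_block => /andP[rqx _] /andP[_ ryq] rxw rwy.
by rewrite (rtr _ _ _ rqx rxw) (rtr _ _ _ rwy ryq).
Qed.

Lemma set_relP r X Y :
  reflect (exists x y, [/\ x \in X, y \in Y & r x y]) (set_rel r X Y).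
Proof.
apply: (iffP existsP) => [[x /andP[xX /existsP[y /andP[yY rxy]]]] | [x [y [xX yY rxy]]]].
  by exists x, y.
by exists x; rewrite xX; apply/existsP; exists y; rewrite yY.
Qed.

Lemma set_rel1 r x Y : set_rel r [set x] Y = [exists y in Y, r x y].
Proof.
apply/set_relP/existsP => [[_ [y [/set1P-> yY rxy]]] | [y /andP[yY rxy]]].
  by exists y; rewrite yY.
by exists x, y; rewrite set11.
Qed.

Lemma NotRel_img_neq0 (U R : rel Q) B q w :
  q \in B -> U q w -> ~~ R q w -> NotRel_img U R B != set0.
Proof.
move=> qB Uqw nRqw; apply/set0Pn; exists w; rewrite inE.
by apply/existsP; exists q; rewrite qB Uqw.
Qed.

End Blocks.

Section Splitters.
Variables (Q : finType) (tr U R P : rel Q) (rep : {set Q} -> Q).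
Hypothesis Rrefl : reflexive R.
Hypothesis Rtr : transitive R.
Hypothesis hsim : forall x y z, tr z x -> R z y -> exists w, U x w && tr y w.
Hypothesis Prefl : reflexive P.
Hypothesis Ptr : transitive P.
Hypothesis hPR : forall x y, P x y -> R x y.
Hypothesis hrep : forall E, is_block P E -> rep E \in E.

Definition rel_succ_blocks (E B : {set Q}) : {set {set Q}} :=
  [set E' : {set Q} | [&& is_block P E', set_rel tr [set rep E] E' & set_rel R B E']].

Definition succ_blocks (E B : {set Q}) : {set {set Q}} :=
  [set Eb : {set Q} | [exists b, [&& Eb == block P b, Eb \subset B & tr (rep E) b]]].

Lemma succ_blocks_sub E B : succ_blocks E B \subset rel_succ_blocks E B.
Proof.
apply/subsetP => _ /[!inE] /existsP[b /and3P[/eqP-> sub_B trb]].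
have bb := block_refl b Prefl.
rewrite is_block_block set_rel1 /=; apply/andP; split.
  by apply/existsP; exists b; rewrite bb.
by apply/set_relP; exists b, b; rewrite (subsetP sub_B) ?Rrefl.
Qed.

Lemma rel_succ_blocks_sub E B E' :
  RelCount tr P R rep E B = succ_blocks_in tr P rep E B ->
  E' \in rel_succ_blocks E B -> E' \subset B.
Proof.
move=> hcnt; have /subset_cardP/(_ (succ_blocks_sub E B)) eq_blocks := esym hcnt.
rewrite -eq_blocks inE => /existsP[b /and3P[/eqP-> sub_B _]].
exact: sub_B.
Qed.

Lemma R_in_P_block E x y : is_block P E -> x \in E -> y \in E -> R x y.
Proof. by move=> EP xE yE; apply/hPR/(is_block_rel Ptr EP). Qed.

Lemma splitter1_NotRel E B :
  splitter1 tr P R rep E B -> NotRel_img U R B != set0.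
Proof.
case=> EP _ /set_relP[x [y [xE yB trxy]]] /eqP; rewrite cards_eq0 => /eqP none.
have [w /andP[Uyw trw]] := hsim trxy (R_in_P_block EP xE (hrep EP)).
apply: (NotRel_img_neq0 yB Uyw); apply/negP => Ryw.
have : block P w \in rel_succ_blocks E B.
  rewrite inE is_block_block set_rel1 /=; apply/andP; split.
    by apply/existsP; exists w; rewrite block_refl.
  by apply/set_relP; exists y, w; rewrite block_refl.
by rewrite [rel_succ_blocks _ _]none inE.
Qed.

Hypothesis no_splitter1 : forall E B, ~ splitter1 tr P R rep E B.

Lemma splitter2_closed E B x w b :
  is_block P E -> is_block R B ->
  RelCount tr P R rep E B = succ_blocks_in tr P rep E B ->
  x \in E -> tr x w -> b \in B -> R b w -> w \in B.
Proof.
move=> EP BR hcnt xE trxw bB Rbw.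
have /set0Pn[E' hE'] : rel_succ_blocks E (block R w) != set0.
  rewrite -cards_eq0; apply/eqP => none.
  apply: (no_splitter1 (And4 EP (is_block_block R w) _ none)).
  by apply/set_relP; exists x, w; rewrite block_refl.
move: (hE'); rewrite inE => /and3P[E'P trE' /set_relP[u [v [uw vE' Ruv]]]].
have Rwv : R w v by move: uw; rewrite mem_block => /andP[Rwu _]; exact: Rtr Ruv.
have E'B : E' \subset B.
  apply: (rel_succ_blocks_sub hcnt); rewrite inE E'P trE'.
  by apply/set_relP; exists b, v; rewrite bB vE' (Rtr Rbw Rwv).
exact: (is_block_convex Rtr BR bB (subsetP E'B v vE') Rbw Rwv).
Qed.

Lemma splitter2_NotRel E B :
  splitter2 tr P R rep E B -> NotRel_img U R B != set0.
Proof.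
case=> EP BR; rewrite set_rel1 => /existsP[b /andP[bB trb]] hcnt.
case/subsetPn=> x xE x_notin_pre.
have [w /andP[Ubw trxw]] := hsim trb (R_in_P_block EP (hrep EP) xE).
apply: (NotRel_img_neq0 bB Ubw); apply/negP => Rbw.
have wB := splitter2_closed EP BR hcnt xE trxw bB Rbw.
by move: x_notin_pre; rewrite inE => /existsP; apply; exists w; rewrite wB.
Qed.

End Splitters.

Theorem proposition5 (Q : finType) (tr U R P : rel Q) (rep : {set Q} -> Q)
  (hU : is_preorder U) (hR : is_preorder R) (hRU : forall x y, R x y -> U x y)
  (* R o ->^{-1} subset of ->^{-1} o U *)
  (hsim : forall x y z, tr z x -> R z y -> exists w, U x w && tr y w)
  (hP : is_equivalence P) (hPR : forall x y, P x y -> R x y)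
  (hrep : forall E, is_block P E -> rep E \in E) :
  (forall E B, splitter1 tr P R rep E B -> NotRel_img U R B != set0) /\
  ((forall E B, ~ splitter1 tr P R rep E B) ->
   forall E B, splitter2 tr P R rep E B -> NotRel_img U R B != set0).
Proof.
have [Rrefl Rtr] := hR; have [Prefl [_ Ptr]] := hP.
split; first exact: (splitter1_NotRel hsim Prefl Ptr hPR hrep).
exact: (splitter2_NotRel Rrefl Rtr hsim Prefl Ptr hPR hrep).
Qed.
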